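(* Assume that $H: [0,1]\to\mathbb{R}$ is upper semi-continuous. Let $\widehat H$ be the concave envelope of $H$. Then: (a) If $\liminf_{t\to1}{H(t)-H(1)\over t-1}>-\infty$, then $\widehat H^\prime(1-)>-\infty$. (b) If $\limsup_{t\to0}{H(t)-H(0)\over t}<\infty$, then $\widehat H^\prime(0)<\infty$.
   Context: The concave envelope $\widehat H$ of $H$ is defined by $\widehat H(s)=\inf\{G(s)\mid G\text{ is concave and }G\ge H\text{ on }[0,1]\}$, $s\in[0,1]$. Primes denote right derivatives; $\widehat H'(1-)$ is the left limit at $1$ of the right derivative. *)

From Stdlib Require Import Reals.
From Coquelicot Require Import Coquelicot.
Open Scope R_scope.

Definition usc_on01 (H : R -> R) : Prop :=
  forall x, 0 <= x <= 1 -> forall eps, 0 < eps ->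
    exists delta, 0 < delta /\
      forall y, 0 <= y <= 1 -> Rabs (y - x) < delta -> H y < H x + eps.

Definition concave_on01 (G : R -> R) : Prop :=
  forall x y t, 0 <= x <= 1 -> 0 <= y <= 1 -> 0 <= t <= 1 ->
    t * G x + (1 - t) * G y <= G (t * x + (1 - t) * y).

Definition env_set (H : R -> R) (s : R) : R -> Prop :=
  fun y => exists G : R -> R,
    concave_on01 G /\ (forall x, 0 <= x <= 1 -> H x <= G x) /\ y = G s.

Definition concave_envelope_Rbar (H : R -> R) (s : R) : Rbar :=
  Glb_Rbar (env_set H s).

(* Real-valued concave envelope (the infimum is finite when H is usc on [0,1]). *)
Definition concave_envelope (H : R -> R) (s : R) : R :=
  real (concave_envelope_Rbar H s).

Definition diffq (f : R -> R) (s : R) : R -> R :=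
  fun h => (f (s + h) - f s) / h.

Definition is_right_deriv (f : R -> R) (s : R) (l : Rbar) : Prop :=
  filterlim (diffq f s) (at_right 0) (Rbar_locally l).

From Stdlib Require Import Reals Lra Psatz Classical.
From Coquelicot Require Import Coquelicot.
Open Scope R_scope.

(* An upper semicontinuous [H] is bounded above on [0,1], so its concave envelope is finite
   and concave. For a concave function the difference quotients at [s] increase as [h]
   decreases to [0]; the right derivative therefore exists as their supremum and is
   nonincreasing in [s]. Under the hypothesis of (a), the upper bound yields an affine
   majorant of [H] through [(1, H 1)] with some finite slope [K]. It also majorizes the
   envelope, so every chord of the envelope ending at [1] has slope at least [K], hence so
   do the right derivatives, and their monotone limit at [1-] is finite. Part (b) is the
   same argument at [0]: an affine majorant through [(0, H 0)] bounds the difference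
   quotients of the envelope at [0] from above. *)

(* [sup_on g a b] is the supremum of [g] over [(a, b)] (junk value [0] when it is infinite). *)
Definition sup_on (g : R -> R) (a b : R) : R :=
  real (Lub_Rbar (fun y => exists x, a < x < b /\ y = g x)).

Section AntitoneLimit.
Variables (g : R -> R) (a b : R).
Hypothesis a_lt_b : a < b.
Hypothesis g_antitone : forall x y, a < x -> x < y -> y < b -> g y <= g x.
Hypothesis g_bounded : exists K, forall x, a < x < b -> g x <= K.

Lemma is_lub_sup_on :
  is_lub_Rbar (fun y => exists x, a < x < b /\ y = g x) (sup_on g a b).
Proof.
  unfold sup_on. set (E := fun y => exists x, a < x < b /\ y = g x).
  destruct (Lub_Rbar_correct E) as [Hub Hleast].
  destruct g_bounded as [K HK].
  assert (Hlow : Rbar_le (g ((a + b) / 2)) (Lub_Rbar E)).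
  { apply Hub. exists ((a + b) / 2). split; [lra | reflexivity]. }
  assert (Hup : Rbar_le (Lub_Rbar E) K).
  { apply Hleast. intros y [x [Hx ->]]. apply HK, Hx. }
  destruct (Lub_Rbar E) as [L | |]; try contradiction; split; assumption.
Qed.

Lemma sup_on_ub x : a < x < b -> g x <= sup_on g a b.
Proof. intros Hx. apply (proj1 is_lub_sup_on). exists x. auto. Qed.

Lemma sup_on_least K : (forall x, a < x < b -> g x <= K) -> sup_on g a b <= K.
Proof.
  intros HK. apply (proj2 is_lub_sup_on (Finite K)).
  intros y [x [Hx ->]]. apply HK, Hx.
Qed.

Lemma sup_on_approx eps : 0 < eps -> exists x0, a < x0 < b /\ sup_on g a b - eps < g x0.
Proof.
  intros Heps. apply NNPP. intros Hnone.
  assert (sup_on g a b <= sup_on g a b - eps); [|lra].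
  apply sup_on_least. intros x Hx. apply Rnot_lt_le. intros Hlt.
  apply Hnone. exists x. auto.
Qed.

Lemma lim_right_sup_on : filterlim g (at_right a) (locally (sup_on g a b)).
Proof.
  apply filterlim_locally. intros eps.
  destruct (sup_on_approx eps (cond_pos eps)) as [x0 [Hx0 Hgx0]].
  assert (Hd : 0 < x0 - a) by lra.
  exists (mkposreal _ Hd). intros x Hx Hax. apply Rabs_lt_between' in Hx. simpl in Hx.
  assert (g x0 <= g x) by (apply g_antitone; lra).
  assert (g x <= sup_on g a b) by (apply sup_on_ub; lra).
  apply Rabs_lt_between'. lra.
Qed.

End AntitoneLimit.

Lemma antitone_lim_left (D : R -> R) (a b K : R) : a < b ->
  (forall x y, a < x -> x < y -> y < b -> D y <= D x) ->
  (forall x, a < x < b -> K <= D x) ->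
  exists L, filterlim D (at_left b) (locally L).
Proof.
  intros Hab Hanti HK.
  set (g := fun y => - D (- y)).
  exists (- sup_on g (- b) (- a)).
  apply filterlim_ext with (fun x => - g (- x)).
  { intros x. unfold g. rewrite !Ropp_involutive. reflexivity. }
  eapply filterlim_comp; [| apply (filterlim_opp (V := R_NormedModule))].
  eapply filterlim_comp; [apply filterlim_Ropp_left |].
  apply lim_right_sup_on; [lra | |].
  - intros x y Hx Hxy Hy. unfold g. apply Ropp_le_contravar, Hanti; lra.
  - exists (- K). intros x Hx. unfold g. apply Ropp_le_contravar, HK. lra.
Qed.

Lemma usc_bounded_above (H : R -> R) : usc_on01 H ->
  exists B, forall x, 0 <= x <= 1 -> H x <= B.
Proof.
  intros Husc.
  set (S := fun b => 0 <= b <= 1 /\ exists B, forall y, 0 <= y <= b -> H y <= B).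
  assert (S0 : S 0).
  { split; [lra |]. exists (H 0). intros y Hy. replace y with 0 by lra. lra. }
  assert (S_bound : bound S) by (exists 1; intros x [Hx _]; lra).
  destruct (completeness S S_bound (ex_intro _ 0 S0)) as [c [c_ub c_least]].
  assert (Hc : 0 <= c <= 1).
  { split; [apply c_ub, S0 | apply c_least; intros x [Hx _]; lra]. }
  destruct (Husc c Hc 1 Rlt_0_1) as [d [Hd H_near_c]].
  assert (Hb : exists b, S b /\ c - d < b).
  { apply NNPP. intros Hnone. assert (c <= c - d); [|lra].
    apply c_least. intros x Hx. apply Rnot_lt_le. intros Hlt. apply Hnone. eauto. }
  destruct Hb as [b [[Hb [B HB]] Hcb]].
  assert (b <= c) by (apply c_ub; split; [exact Hb | exists B; exact HB]).
  (* the bound extends past [c], so [c] can only be the supremum if the extension reaches [1] *)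
  set (b' := Rmin (c + d / 2) 1).
  assert (S_b' : S b').
  { split; [unfold b'; split; [apply Rmin_glb | apply Rmin_r]; lra |].
    exists (Rmax B (H c + 1)). intros y Hy.
    destruct (Rle_or_lt y b) as [Hyb | Hyb].
    - apply Rle_trans with B; [apply HB; lra | apply Rmax_l].
    - apply Rle_trans with (H c + 1); [| apply Rmax_r].
      assert (b' <= c + d / 2) by apply Rmin_l.
      assert (b' <= 1) by apply Rmin_r.
      left. apply H_near_c; [lra |]. apply Rabs_lt_between'. lra. }
  assert (b' = 1).
  { assert (Hb'c : b' <= c) by (apply c_ub, S_b').
    revert Hb'c. unfold b'. apply Rmin_case; intros; lra. }
  destruct S_b' as [_ [B' HB']]. exists B'. intros x Hx. apply HB'. lra.
Qed.

Lemma affine_concave (a k : R) : concave_on01 (fun x => a + k * x).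
Proof. intros x y t _ _ _. apply Req_le. ring. Qed.

Definition slope (f : R -> R) (x y : R) : R := (f y - f x) / (y - x).

Lemma diffq_slope (f : R -> R) (s h : R) : 0 < h -> diffq f s h = slope f s (s + h).
Proof. intros. unfold diffq, slope. replace (s + h - s) with h by ring. reflexivity. Qed.

Section ConcaveSlopes.
Variable f : R -> R.
Hypothesis f_concave : concave_on01 f.

Lemma concave_chord a b c : 0 <= a -> a < b -> b < c -> c <= 1 ->
  (c - b) * f a + (b - a) * f c <= (c - a) * f b.
Proof.
  intros Ha Hab Hbc Hc.
  set (t := (c - b) / (c - a)).
  assert (Ht : t * (c - a) = c - b) by (unfold t; field; lra).
  assert (Ht01 : 0 <= t <= 1) by nra.
  assert (Hk := f_concave a c t ltac:(lra) ltac:(lra) Ht01).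
  replace (t * a + (1 - t) * c) with b in Hk by (unfold t; field; lra).
  replace ((c - b) * f a + (b - a) * f c) with ((c - a) * (t * f a + (1 - t) * f c))
    by (unfold t; field; lra).
  apply Rmult_le_compat_l; lra.
Qed.

Lemma concave_slope_chain a b c : 0 <= a -> a < b -> b < c -> c <= 1 ->
  slope f b c <= slope f a b.
Proof.
  intros Ha Hab Hbc Hc. pose proof (concave_chord a b c Ha Hab Hbc Hc).
  unfold slope. apply Rmult_le_reg_l with ((b - a) * (c - b)); [nra |].
  replace ((b - a) * (c - b) * ((f c - f b) / (c - b))) with ((b - a) * (f c - f b))
    by (field; lra).
  replace ((b - a) * (c - b) * ((f b - f a) / (b - a))) with ((c - b) * (f b - f a))
    by (field; lra).
  nra.
Qed.

Lemma concave_slope_antitone a b c : 0 <= a -> a < b -> b < c -> c <= 1 ->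
  slope f a c <= slope f a b.
Proof.
  intros Ha Hab Hbc Hc. pose proof (concave_chord a b c Ha Hab Hbc Hc).
  unfold slope. apply Rmult_le_reg_l with ((b - a) * (c - a)); [nra |].
  replace ((b - a) * (c - a) * ((f c - f a) / (c - a))) with ((b - a) * (f c - f a))
    by (field; lra).
  replace ((b - a) * (c - a) * ((f b - f a) / (b - a))) with ((c - a) * (f b - f a))
    by (field; lra).
  nra.
Qed.

Lemma diffq_antitone s : 0 <= s < 1 ->
  forall h1 h2, 0 < h1 -> h1 < h2 -> h2 < 1 - s -> diffq f s h2 <= diffq f s h1.
Proof.
  intros Hs h1 h2 Hh1 Hh12 Hh2. rewrite !diffq_slope by lra.
  apply concave_slope_antitone; lra.
Qed.

Lemma diffq_le_slope s : 0 < s < 1 -> forall h, 0 < h < 1 - s -> diffq f s h <= slope f 0 s.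
Proof.
  intros Hs h Hh. rewrite diffq_slope by lra. apply concave_slope_chain; lra.
Qed.

Definition concave_rderiv (s : R) : R := sup_on (diffq f s) 0 (1 - s).

Lemma is_right_deriv_rderiv s : 0 <= s < 1 ->
  (exists K, forall h, 0 < h < 1 - s -> diffq f s h <= K) ->
  is_right_deriv f s (concave_rderiv s).
Proof.
  intros Hs Hbounded. apply lim_right_sup_on; [lra | apply diffq_antitone, Hs | exact Hbounded].
Qed.

Lemma rderiv_le_slope r s : 0 <= r < s -> s < 1 -> concave_rderiv s <= slope f r s.
Proof.
  intros Hr Hs. apply sup_on_least; [lra | |].
  - exists (slope f 0 s). apply diffq_le_slope. lra.
  - intros h Hh. rewrite diffq_slope by lra. apply concave_slope_chain; lra.
Qed.

Lemma slope_le_rderiv r s : 0 < r < s -> s < 1 -> slope f r s <= concave_rderiv r.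
Proof.
  intros Hr Hs.
  replace (slope f r s) with (diffq f r (s - r))
    by (rewrite diffq_slope by lra; f_equal; ring).
  apply sup_on_ub; [lra | |].
  - exists (slope f 0 r). apply diffq_le_slope. lra.
  - lra.
Qed.

Lemma rderiv_antitone r s : 0 < r -> r < s -> s < 1 -> concave_rderiv s <= concave_rderiv r.
Proof.
  intros Hr Hrs Hs. apply Rle_trans with (slope f r s).
  - apply rderiv_le_slope; lra.
  - apply slope_le_rderiv; lra.
Qed.

Lemma rderiv_ge_of_line_at1 K : (forall x, 0 <= x <= 1 -> f x <= f 1 + K * (x - 1)) ->
  forall s, 0 < s < 1 -> K <= concave_rderiv s.
Proof.
  intros Hline s Hs. set (m := (1 + s) / 2).
  apply Rle_trans with (slope f s m); [| apply slope_le_rderiv; unfold m; lra].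
  apply Rle_trans with (slope f s 1); [| apply concave_slope_antitone; unfold m; lra].
  assert (Hfs := Hline s ltac:(lra)).
  unfold slope. apply Rmult_le_reg_r with (1 - s); [lra |].
  replace ((f 1 - f s) / (1 - s) * (1 - s)) with (f 1 - f s) by (field; lra).
  lra.
Qed.

Lemma diffq_le_of_line_at0 K : (forall x, 0 <= x <= 1 -> f x <= f 0 + K * (x - 0)) ->
  forall h, 0 < h < 1 -> diffq f 0 h <= K.
Proof.
  intros Hline h Hh. assert (Hfh := Hline h ltac:(lra)).
  unfold diffq. rewrite Rplus_0_l. apply Rmult_le_reg_r with h; [lra |].
  replace ((f h - f 0) / h * h) with (f h - f 0) by (field; lra).
  lra.
Qed.

End ConcaveSlopes.

Section Envelope.
Variables (H : R -> R) (B : R).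
Hypothesis H_bounded : forall x, 0 <= x <= 1 -> H x <= B.

Lemma envelope_finite s : 0 <= s <= 1 ->
  concave_envelope_Rbar H s = Finite (concave_envelope H s) /\ H s <= concave_envelope H s.
Proof.
  intros Hs. unfold concave_envelope.
  destruct (Glb_Rbar_correct (env_set H s)) as [Hlb Hgreatest].
  assert (Hup : Rbar_le (concave_envelope_Rbar H s) B).
  { apply Hlb. exists (fun _ => B). repeat split; auto. intros x y t _ _ _. lra. }
  assert (Hlow : Rbar_le (H s) (concave_envelope_Rbar H s)).
  { apply Hgreatest. intros y [G [_ [HG ->]]]. apply HG, Hs. }
  unfold concave_envelope_Rbar in *.
  destruct (Glb_Rbar (env_set H s)); try contradiction; auto.
Qed.

Lemma envelope_ge s : 0 <= s <= 1 -> H s <= concave_envelope H s.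
Proof. intros Hs. apply envelope_finite, Hs. Qed.

Lemma envelope_le (G : R -> R) s : concave_on01 G -> (forall x, 0 <= x <= 1 -> H x <= G x) ->
  0 <= s <= 1 -> concave_envelope H s <= G s.
Proof.
  intros HG HGH Hs. destruct (envelope_finite s Hs) as [E _].
  destruct (Glb_Rbar_correct (env_set H s)) as [Hlb _].
  assert (Hle : Rbar_le (concave_envelope_Rbar H s) (G s)) by (apply Hlb; exists G; auto).
  rewrite E in Hle. exact Hle.
Qed.

Lemma envelope_concave : concave_on01 (concave_envelope H).
Proof.
  intros x y t Hx Hy Ht.
  assert (Hz : 0 <= t * x + (1 - t) * y <= 1) by nra.
  destruct (envelope_finite _ Hz) as [E _].
  destruct (Glb_Rbar_correct (env_set H (t * x + (1 - t) * y))) as [_ Hgreatest].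
  assert (Hle : Rbar_le (t * concave_envelope H x + (1 - t) * concave_envelope H y)
                        (concave_envelope_Rbar H (t * x + (1 - t) * y))).
  { apply Hgreatest. intros w [G [HGc [HGH ->]]]. simpl.
    pose proof (envelope_le G x HGc HGH Hx). pose proof (envelope_le G y HGc HGH Hy).
    pose proof (HGc x y t Hx Hy Ht). nra. }
  rewrite E in Hle. exact Hle.
Qed.

Lemma envelope_below_line x0 K : 0 <= x0 <= 1 ->
  (forall x, 0 <= x <= 1 -> H x <= H x0 + K * (x - x0)) ->
  forall x, 0 <= x <= 1 -> concave_envelope H x <= concave_envelope H x0 + K * (x - x0).
Proof.
  intros Hx0 Hline x Hx.
  pose proof (envelope_ge x0 Hx0).
  assert (concave_envelope H x <= H x0 - K * x0 + K * x); [| lra].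
  apply (envelope_le (fun x => (H x0 - K * x0) + K * x)); [apply affine_concave | | exact Hx].
  intros y Hy. specialize (Hline y Hy). lra.
Qed.

End Envelope.

Lemma affine_majorant_at0 (H : R -> R) (B M d : R) : 0 < d ->
  (forall x, 0 <= x <= 1 -> H x <= B) ->
  (forall t, 0 < t < d -> H t <= H 0 + M * t) ->
  exists K, forall x, 0 <= x <= 1 -> H x <= H 0 + K * (x - 0).
Proof.
  intros Hd HB Hnear.
  (* slope [M] near [0], and slope [(B - H 0) / d] suffices to clear the bound [B] beyond [d] *)
  exists (Rmax M ((B - H 0) / d)).
  assert (HB0 : H 0 <= B) by (apply HB; lra).
  assert (Hq : (B - H 0) / d * d = B - H 0) by (field; lra).
  assert (Hq0 : 0 <= (B - H 0) / d) by (apply Rdiv_le_0_compat; lra).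
  pose proof (Rmax_l M ((B - H 0) / d)). pose proof (Rmax_r M ((B - H 0) / d)).
  intros x Hx. rewrite Rminus_0_r.
  destruct (Req_dec x 0) as [-> | Hx0]; [lra |].
  destruct (Rlt_or_le x d) as [Hxd | Hxd].
  - specialize (Hnear x ltac:(lra)). nra.
  - specialize (HB x Hx). nra.
Qed.

Lemma affine_majorant_right0 (H : R -> R) (B M : R) :
  (forall x, 0 <= x <= 1 -> H x <= B) ->
  at_right 0 (fun t => (H t - H 0) / t <= M) ->
  exists K, forall x, 0 <= x <= 1 -> H x <= H 0 + K * (x - 0).
Proof.
  intros HB [[d Hd] HM].
  apply (affine_majorant_at0 H B M d Hd HB). intros t Ht.
  assert (Hq : (H t - H 0) / t <= M).
  { apply HM; [apply Rabs_lt_between'; simpl; lra | lra]. }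
  apply Rmult_le_compat_r with (r := t) in Hq; [| lra].
  replace ((H t - H 0) / t * t) with (H t - H 0) in Hq by (field; lra).
  lra.
Qed.

Lemma affine_majorant_left1 (H : R -> R) (B M : R) :
  (forall x, 0 <= x <= 1 -> H x <= B) ->
  at_left 1 (fun t => M <= (H t - H 1) / (t - 1)) ->
  exists K, forall x, 0 <= x <= 1 -> H x <= H 1 + K * (x - 1).
Proof.
  intros HB [[d Hd] HM].
  destruct (affine_majorant_at0 (fun u => H (1 - u)) B (- M) d Hd) as [K HK].
  - intros u Hu. apply HB. lra.
  - intros u Hu. rewrite Rminus_0_r.
    assert (Hq : M <= (H (1 - u) - H 1) / (1 - u - 1)).
    { apply HM; [apply Rabs_lt_between'; simpl; lra | lra]. }
    apply Rmult_le_compat_r with (r := u) in Hq; [| lra].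
    replace ((H (1 - u) - H 1) / (1 - u - 1) * u) with (H 1 - H (1 - u)) in Hq by (field; lra).
    lra.
  - exists (- K). intros x Hx. specialize (HK (1 - x) ltac:(lra)).
    rewrite !Rminus_0_r in HK. replace (1 - (1 - x)) with x in HK by ring.
    lra.
Qed.

Theorem lemmaA3 (H : R -> R) (Husc : usc_on01 H) :
  (* (a) liminf_{t -> 1} (H t - H 1)/(t - 1) > -oo  ==>  Hhat'(1-) > -oo *)
  ((exists M : R, at_left 1 (fun t => M <= (H t - H 1) / (t - 1))) ->
   exists (D : R -> R) (l : Rbar),
     (forall s, 0 < s < 1 ->
        is_right_deriv (concave_envelope H) s (Finite (D s))) /\
     filterlim D (at_left 1) (Rbar_locally l) /\
     Rbar_lt m_infty l) /\
  (* (b) limsup_{t -> 0} (H t - H 0)/t < +oo  ==>  Hhat'(0) < +oo *)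
  ((exists M : R, at_right 0 (fun t => (H t - H 0) / t <= M)) ->
   exists l : Rbar,
     is_right_deriv (concave_envelope H) 0 l /\ Rbar_lt l p_infty).
Proof.
  destruct (usc_bounded_above H Husc) as [B HB].
  set (f := concave_envelope H).
  assert (f_concave : concave_on01 f) by exact (envelope_concave H B HB).
  split.
  - intros [M HM].
    destruct (affine_majorant_left1 H B M HB HM) as [K HK].
    pose proof (envelope_below_line H B HB 1 K ltac:(lra) HK) as f_below.
    destruct (antitone_lim_left (concave_rderiv f) 0 1 K) as [L HL]; [lra | | |].
    + intros r s Hr Hrs Hs. apply rderiv_antitone; assumption.
    + apply rderiv_ge_of_line_at1; assumption.
    + exists (concave_rderiv f), (Finite L). split; [| split; [exact HL | exact I]].
      intros s Hs. apply is_right_deriv_rderiv; [exact f_concave | lra |].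
      exists (slope f 0 s). apply diffq_le_slope; assumption.
  - intros [M HM].
    destruct (affine_majorant_right0 H B M HB HM) as [K HK].
    pose proof (envelope_below_line H B HB 0 K ltac:(lra) HK) as f_below.
    exists (Finite (concave_rderiv f 0)). split; [| exact I].
    apply is_right_deriv_rderiv; [exact f_concave | lra |].
    exists K. rewrite Rminus_0_r. apply diffq_le_of_line_at0; assumption.
Qed.
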